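(* For each $\eta\in(0,\eta_4)$ and each integer $j\ge1$, we have $\{z_k:k\ge j\}\subset D(0,|z_j|)$ and the broken segment $z_0z_1\cdots z_{j-1}$ is contained in $\mathbb{C}\setminus D(0,|z_j|)$.
   Context: For $\eta\in(0,\pi/3)$ let $a=\frac{e^{-i\eta}}{2\cos\eta}$, $c=\frac{1}{1-|a|^4}$, $z_k=ca^{k+1}$ for $k\ge0$. Let $\Phi_4(\eta)=(1-|a|^4)\sin3\eta-|a|^3\sin2\eta+|a|^4\sin\eta$; it has a unique zero in $(\pi/4,\pi/3)$, denoted $\eta_4$. $D(0,r)$ is the closed disk of radius $r$ centered at $0$; $v_0v_1\cdots v_n$ denotes the union of the segments $v_{i-1}v_i$, $i=1,\dots,n$ (for $j=1$ it is the single point $z_0$). *)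

From Stdlib Require Import Reals Lra.
From Coquelicot Require Import Coquelicot.
Open Scope R_scope.

(* a = e^{-i eta} / (2 cos eta), with e^{-i eta} = cos eta - i sin eta *)
Definition a_of (eta : R) : C :=
  (((cos eta, - sin eta)%R : C) / RtoC (2 * cos eta))%C.

Definition c_of (eta : R) : R := 1 / (1 - (Cmod (a_of eta)) ^ 4).

Definition z_of (eta : R) (k : nat) : C :=
  (RtoC (c_of eta) * Cpow (a_of eta) (S k))%C.

Definition Phi4 (eta : R) : R :=
  let r := Cmod (a_of eta) in
  (1 - r ^ 4) * sin (3 * eta) - r ^ 3 * sin (2 * eta) + r ^ 4 * sin eta.

Definition closed_disk0 (r : R) (w : C) : Prop := Cmod w <= r.

Definition segment (u v w : C) : Prop :=
  exists t : R, 0 <= t <= 1 /\ w = (RtoC (1 - t) * u + RtoC t * v)%C.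

Definition broken_segment (z : nat -> C) (n : nat) (w : C) : Prop :=
  (n = 0%nat /\ w = z 0%nat) \/
  (exists i : nat, (1 <= i <= n)%nat /\ segment (z (pred i)) (z i) w).

(** Write [r = |a| = 1 / (2 cos eta)].  The moduli [|z_k| = c r^(k+1)] decrease
    geometrically, which gives the first claim.  Since [Re a = 1/2], a point
    [(1-t) z_(i-1) + t z_i = z_(i-1) ((1-t) + t a)] of the broken segment has
    [|(1-t) + t a|^2 = 1 - t + r^2 t^2], and this exceeds [r^4] for every
    [t] in [[0,1]] as soon as [r^4 < 1/2]; hence that point lies outside the
    disk of radius [|z_(i+1)| >= |z_j|].  Finally
    [Phi4 eta = sin eta (4 cos^2 eta - 1) (16 cos^4 eta - 2) / (16 cos^4 eta)],
    so [eta4] is the angle with [16 cos^4 eta4 = 2], and [r^4 = 1 / (16 cos^4 eta)]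
    is below [1/2] exactly when [eta < eta4]. *)

From Stdlib Require Import Reals Lra Psatz Lia.
From Coquelicot Require Import Coquelicot.
Open Scope R_scope.

Lemma quadratic_gt_sq (s t : R) :
  0 < s -> s ^ 2 < 1/2 -> 0 <= t <= 1 -> s ^ 2 < 1 - t + s * t ^ 2.
Proof.
  intros Hs Hs2 Ht.
  (* For [2s <= 1] the difference is [(1-t)(1-s(1+t)) + s(1-s)]; otherwise
     [4s] times it is [(2st-1)^2 + 4s(1-s^2) - 1] with [4s(1-s^2) > 2s > 1]. *)
  destruct (Rle_lt_dec (2 * s) 1).
  - assert (0 <= (1 - t) * (1 - s * (1 + t))) by (apply Rmult_le_pos; nra).
    nra.
  - assert (0 <= (2 * s * t - 1) ^ 2) by apply pow2_ge_0.
    nra.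
Qed.

Lemma Cmod_convex_1_sq (a : C) (t : R) : Re a = 1/2 ->
  Cmod (RtoC (1 - t) + RtoC t * a)%C ^ 2 = 1 - t + Cmod a ^ 2 * t ^ 2.
Proof.
  destruct a as [x y]; unfold Re; cbn [fst]; intros ->.
  unfold Cmod, RtoC, Cplus, Cmult; cbn [fst snd].
  rewrite !pow2_sqrt by (apply Rplus_le_le_0_compat; apply pow2_ge_0).
  field.
Qed.

Lemma segment_mulr (u a w : C) :
  segment u (u * a)%C w ->
  exists t : R, 0 <= t <= 1 /\ w = (u * (RtoC (1 - t) + RtoC t * a))%C.
Proof.
  intros [t [Ht ->]].
  exists t; split; [exact Ht | ring].
Qed.

Section GeometricSequence.

Variables (z : nat -> C) (a : C).
Hypothesis z_succ : forall k, z (S k) = (z k * a)%C.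
Hypothesis z0_neq0 : z 0%nat <> 0%C.
Hypothesis Re_a : Re a = 1/2.
Hypothesis Cmod_a_pow4 : Cmod a ^ 4 < 1/2.

Lemma Cmod_z_add (k m : nat) : Cmod (z (k + m)) = Cmod (z k) * Cmod a ^ m.
Proof.
  induction m as [|m IH]; simpl.
  - rewrite Nat.add_0_r; ring.
  - rewrite Nat.add_succ_r, z_succ, Cmod_mult, IH; ring.
Qed.

Lemma Cmod_a_pos : 0 < Cmod a.
Proof.
  apply Cmod_gt_0; intros ->.
  unfold Re in Re_a; simpl in Re_a; lra.
Qed.

Lemma Cmod_a_lt_1 : Cmod a < 1.
Proof.
  destruct (Rlt_le_dec (Cmod a) 1) as [Hlt | Hge]; [exact Hlt |].
  pose proof (pow_incr 1 (Cmod a) 4 (conj Rle_0_1 Hge)).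
  rewrite pow1 in *; lra.
Qed.

Lemma Cmod_z_pos (k : nat) : 0 < Cmod (z k).
Proof.
  rewrite <- (Nat.add_0_l k), Cmod_z_add.
  apply Rmult_lt_0_compat; [apply Cmod_gt_0, z0_neq0 | apply pow_lt, Cmod_a_pos].
Qed.

Lemma Cmod_z_le (j k : nat) : (j <= k)%nat -> Cmod (z k) <= Cmod (z j).
Proof.
  intros Hjk.
  replace k with (j + (k - j))%nat by lia.
  rewrite Cmod_z_add.
  pose proof (pow_incr (Cmod a) 1 (k - j) (conj (Cmod_ge_0 a) (Rlt_le _ _ Cmod_a_lt_1))).
  pose proof (Cmod_z_pos j).
  rewrite pow1 in *; nra.
Qed.

Lemma Cmod_z_succ_lt (k : nat) : Cmod (z (S k)) < Cmod (z k).
Proof.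
  rewrite z_succ, Cmod_mult.
  pose proof (Cmod_z_pos k); pose proof Cmod_a_lt_1; nra.
Qed.

Lemma Cmod_a_sq_lt_convex (t : R) : 0 <= t <= 1 ->
  Cmod a ^ 2 < Cmod (RtoC (1 - t) + RtoC t * a)%C.
Proof.
  intros Ht.
  apply Rsqr_incrst_0; [| apply pow_le, Cmod_ge_0 | apply Cmod_ge_0].
  rewrite !Rsqr_pow2, Cmod_convex_1_sq by exact Re_a.
  apply quadratic_gt_sq; [apply pow_lt, Cmod_a_pos | | exact Ht].
  rewrite <- pow_mult; exact Cmod_a_pow4.
Qed.

Lemma segment_z_outside (k : nat) (w : C) :
  segment (z k) (z (S k)) w -> Cmod (z (S (S k))) < Cmod w.
Proof.
  rewrite z_succ; intros Hw.
  destruct (segment_mulr _ _ _ Hw) as [t [Ht ->]].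
  replace (S (S k)) with (k + 2)%nat by lia.
  rewrite Cmod_z_add, Cmod_mult.
  apply Rmult_lt_compat_l; [apply Cmod_z_pos | apply Cmod_a_sq_lt_convex, Ht].
Qed.

Lemma broken_segment_z_outside (j : nat) (w : C) : (1 <= j)%nat ->
  broken_segment z (pred j) w -> Cmod (z j) < Cmod w.
Proof.
  intros Hj [[Hj1 ->] | [i [Hi Hw]]].
  - replace j with 1%nat by lia; apply Cmod_z_succ_lt.
  - destruct i as [|i]; [lia |].
    apply (Rle_lt_trans _ (Cmod (z (S (S i))))).
    + apply Cmod_z_le; lia.
    + apply segment_z_outside, Hw.
Qed.

End GeometricSequence.

Lemma a_of_eq (eta : R) : cos eta <> 0 ->
  a_of eta = (1/2, - sin eta / (2 * cos eta)).
Proof.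
  intros Hcos; unfold a_of, Cdiv, Cmult, Cinv, RtoC; simpl.
  apply injective_projections; simpl; field; exact Hcos.
Qed.

Lemma Re_a_of (eta : R) : cos eta <> 0 -> Re (a_of eta) = 1/2.
Proof. intros Hcos; rewrite a_of_eq by exact Hcos; reflexivity. Qed.

Lemma Cmod_a_of (eta : R) : 0 < cos eta -> Cmod (a_of eta) = / (2 * cos eta).
Proof.
  intros Hcos.
  rewrite a_of_eq by lra; unfold Cmod; cbn [fst snd].
  rewrite <- (sqrt_pow2 (/ (2 * cos eta))) by (left; apply Rinv_0_lt_compat; lra).
  f_equal.
  assert (Hsin : sin eta ^ 2 = 1 - cos eta ^ 2)
    by (pose proof (sin2_cos2 eta); unfold Rsqr in *; lra).
  field_simplify; [| lra ..].
  rewrite Hsin; field; lra.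
Qed.

Lemma z_of_succ (eta : R) (k : nat) : z_of eta (S k) = (z_of eta k * a_of eta)%C.
Proof. unfold z_of; rewrite (Cpow_S _ (S k)); ring. Qed.

Lemma z_of_0_neq0 (eta : R) :
  0 < cos eta -> Cmod (a_of eta) ^ 4 < 1 -> z_of eta 0 <> 0%C.
Proof.
  intros Hcos Ha; apply Cmod_gt_0.
  assert (Hpos : 0 < Cmod (a_of eta))
    by (rewrite Cmod_a_of by exact Hcos; apply Rinv_0_lt_compat; lra).
  assert (Hc : 0 < c_of eta) by (unfold c_of; apply Rdiv_lt_0_compat; lra).
  unfold z_of; rewrite Cmod_mult, Cmod_pow, Cmod_R, Rabs_pos_eq by lra.
  simpl; nra.
Qed.

Lemma Phi4_factor (x : R) : 0 < cos x ->
  Phi4 x = sin x * (4 * cos x ^ 2 - 1) * (16 * cos x ^ 4 - 2) / (16 * cos x ^ 4).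
Proof.
  intros Hcos; unfold Phi4; rewrite Cmod_a_of by exact Hcos.
  replace (3 * x) with (2 * x + x) by ring.
  rewrite sin_plus, cos_2a, !sin_2a.
  assert (Hsin : sin x ^ 2 = 1 - cos x ^ 2)
    by (pose proof (sin2_cos2 x); unfold Rsqr in *; lra).
  replace (sin x * sin x) with (1 - cos x ^ 2) by (rewrite <- Hsin; ring).
  field; lra.
Qed.

Lemma cos_pow4_of_Phi4_root (x : R) :
  PI / 4 < x < PI / 3 -> Phi4 x = 0 -> 16 * cos x ^ 4 = 2.
Proof.
  intros Hx Hroot; pose proof PI_RGT_0.
  assert (Hcos : 1/2 < cos x)
    by (rewrite <- cos_PI3; apply cos_decreasing_1; lra).
  assert (Hsin : 0 < sin x) by (apply sin_gt_0; lra).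
  assert (Hpow4 : 0 < 16 * cos x ^ 4) by (apply Rmult_lt_0_compat; [lra | apply pow_lt; lra]).
  rewrite Phi4_factor in Hroot by lra.
  assert (Hprod : sin x * (4 * cos x ^ 2 - 1) / (16 * cos x ^ 4) * (16 * cos x ^ 4 - 2) = 0)
    by (rewrite <- Hroot; field; lra).
  apply Rmult_integral in Hprod as [Hzero | Hzero]; [| lra].
  exfalso; revert Hzero; apply Rgt_not_eq.
  apply Rdiv_lt_0_compat; [apply Rmult_lt_0_compat; nra | lra].
Qed.

Lemma Cmod_a_of_pow4_lt (eta eta4 : R) :
  0 < eta < eta4 -> eta4 < PI / 2 -> 16 * cos eta4 ^ 4 = 2 ->
  Cmod (a_of eta) ^ 4 < 1/2.
Proof.
  intros Heta Heta4 Hcos4; pose proof PI_RGT_0.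
  assert (Hpos4 : 0 < cos eta4) by (apply cos_gt_0; lra).
  assert (Hlt : cos eta4 < cos eta) by (apply cos_decreasing_1; lra).
  assert (Hlt4 : cos eta4 ^ 4 < cos eta ^ 4)
    by (assert (cos eta4 ^ 2 < cos eta ^ 2) by nra; nra).
  rewrite Cmod_a_of by lra.
  rewrite pow_inv, Rpow_mult_distr.
  apply (Rmult_lt_reg_l (2 ^ 4 * cos eta ^ 4)); [nra |].
  rewrite Rinv_r by nra.
  nra.
Qed.

Theorem lemma5p4 (eta4 : R)
  (Heta4 : PI / 4 < eta4 < PI / 3)
  (Hzero : Phi4 eta4 = 0)
  (Huniq : forall x : R, PI / 4 < x < PI / 3 -> Phi4 x = 0 -> x = eta4) :
  forall (eta : R), 0 < eta < eta4 ->
  forall (j : nat), (1 <= j)%nat ->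
    (forall k : nat, (j <= k)%nat ->
       closed_disk0 (Cmod (z_of eta j)) (z_of eta k)) /\
    (forall w : C, broken_segment (z_of eta) (pred j) w ->
       ~ closed_disk0 (Cmod (z_of eta j)) w).
Proof.
  intros eta Heta j Hj; pose proof PI_RGT_0.
  assert (Hcos : 0 < cos eta) by (apply cos_gt_0; lra).
  assert (Ha4 : Cmod (a_of eta) ^ 4 < 1/2).
  { apply (Cmod_a_of_pow4_lt eta eta4); [exact Heta | lra |].
    exact (cos_pow4_of_Phi4_root eta4 Heta4 Hzero). }
  assert (Hz0 : z_of eta 0 <> 0%C) by (apply z_of_0_neq0; lra).
  assert (Hre : Re (a_of eta) = 1/2) by (apply Re_a_of; lra).
  split.
  - intros k Hk; unfold closed_disk0.
    exact (Cmod_z_le _ _ (z_of_succ eta) Hz0 Hre Ha4 j k Hk).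
  - intros w Hw; unfold closed_disk0; apply Rlt_not_le.
    exact (broken_segment_z_outside _ _ (z_of_succ eta) Hz0 Hre Ha4 j w Hj Hw).
Qed.
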